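(* Let $\theta \in [0,1] \setminus \mathbb{Q}$ and let $m, n \in \mathbb{Z}$ with $0 < m < n$. Define $h, k \colon (S^1)^3 \to (S^1)^3$ by \[ h(\zeta_1, \zeta_2, \zeta_3) = \big(e^{2\pi i\theta}\zeta_1,\ \zeta_1^m\zeta_2,\ \zeta_2^n\zeta_3\big), \qquad k(\zeta_1, \zeta_2, \zeta_3) = \big(e^{2\pi i\theta}\zeta_1,\ \zeta_1^n\zeta_2,\ \zeta_2^m\zeta_3\big). \] Then $h$ and $k$ are not flip conjugate, that is, there is no homeomorphism $g$ of $(S^1)^3$ with $g \circ h \circ g^{-1} = k$ or $g \circ h \circ g^{-1} = k^{-1}$.
   Context: Flip conjugacy: homeomorphisms $h_1 \colon X_1 \to X_1$ and $h_2 \colon X_2 \to X_2$ are conjugate if there is a homeomorphism $g \colon X_1 \to X_2$ with $g \circ h_1 \circ g^{-1} = h_2$. They are flip conjugate if $h_1$ is conjugate to $h_2$ or to $h_2^{-1}$. *)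

From HB Require Import structures.
From mathcomp Require Import all_boot all_order all_algebra.
From mathcomp Require Import all_classical all_reals all_analysis.
Set Implicit Arguments. Unset Strict Implicit. Unset Printing Implicit Defensive.
Import Order.TTheory GRing.Theory Num.Theory.
Import numFieldNormedType.Exports.
Local Open Scope classical_set_scope.
Local Open Scope ring_scope.

(* Complex numbers represented as pairs (Re, Im) in R * R (product topology = usual
   topology of C = R^2). *)
Definition cmul {R : realType} (a b : R * R) : R * R :=
  (a.1 * b.1 - a.2 * b.2, a.1 * b.2 + a.2 * b.1).

Definition cpow {R : realType} (z : R * R) (n : nat) : R * R :=
  iter n (cmul z) (1, 0).

Definition cexp2pi {R : realType} (t : R) : R * R :=
  (cos (2 * pi * t), sin (2 * pi * t)).

Definition circle {R : realType} : set (R * R) :=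
  [set z | z.1 ^+ 2 + z.2 ^+ 2 = 1].

Definition torus3 {R : realType} : set ((R * R) * (R * R) * (R * R)) :=
  [set x | circle x.1.1 /\ circle x.1.2 /\ circle x.2].

Definition homeo_on {X : topologicalType} (A : set X) (g : X -> X) : Prop :=
  exists g' : X -> X,
    [/\ (forall x, A x -> A (g x)), (forall x, A x -> A (g' x)),
        (forall x, A x -> g' (g x) = x), (forall x, A x -> g (g' x) = x)
      & {within A, continuous g} /\ {within A, continuous g'}].

Definition conj_on {X : topologicalType} (A : set X) (f1 f2 : X -> X) : Prop :=
  exists g : X -> X, homeo_on A g /\ forall x, A x -> g (f1 x) = f2 (g x).

Definition inverse_on {X : Type} (A : set X) (f finv : X -> X) : Prop :=
  [/\ (forall x, A x -> A (finv x)), (forall x, A x -> finv (f x) = x)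
    & (forall x, A x -> f (finv x) = x)].

Definition flip_conj_on {X : topologicalType} (A : set X) (f1 f2 : X -> X) : Prop :=
  conj_on A f1 f2 \/ exists f2inv, inverse_on A f2 f2inv /\ conj_on A f1 f2inv.

Definition skew_map {R : realType} (theta : R) (a b : nat)
    (x : (R * R) * (R * R) * (R * R)) : (R * R) * (R * R) * (R * R) :=
  let: (z1, z2, z3) := x in
  (cmul (cexp2pi theta) z1, cmul (cpow z1 a) z2, cmul (cpow z2 b) z3).

From HB Require Import structures.
From mathcomp Require Import all_boot all_order all_algebra.
From mathcomp Require Import all_classical all_reals all_analysis.
From mathcomp Require Import ring lra zify.
Import Order.TTheory GRing.Theory Num.Theory.
Import numFieldNormedType.Exports.
Local Open Scope classical_set_scope.
Local Open Scope ring_scope.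

(* A homeomorphism [g] of the torus [T^3 = R^3 / Z^3] lifts to [R^3], and its
   action on the deck translations [Z^3] is an additive automorphism [M_g], uniquely
   determined by [g] and functorial in it (unique path lifting for the circle).
   The skew products lift to the affine maps [t |-> A t + (theta, 0, 0)] with
   unipotent linear parts [A = skew_lin m n] and [B = skew_lin n m], so a flip
   conjugacy would make [M_g A M_g^-1] equal to [B] or [B^-1].  Over [Z] this forces
   [n] to divide [m], impossible for [0 < m < n].  The argument does not use any
   property of [theta]. *)

Local Notation int3 := (int * int * int)%type.

Section PairContinuity.
Context {T U V : topologicalType} {x : T}.

Lemma continuous_pair {f : T -> U} {g : T -> V} :
  {for x, continuous f} -> {for x, continuous g} ->
  {for x, continuous (fun y => (f y, g y))}.
Proof. exact: (@cvg_pair _ _ _ (nbhs x) (nbhs _) (nbhs _)). Qed.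

Lemma continuous_fst {u : T -> U * V} :
  {for x, continuous u} -> {for x, continuous (fun y => (u y).1)}.
Proof. by move=> u_cont; apply: cvg_comp u_cont _; exact: cvg_fst. Qed.

Lemma continuous_snd {u : T -> U * V} :
  {for x, continuous u} -> {for x, continuous (fun y => (u y).2)}.
Proof. by move=> u_cont; apply: cvg_comp u_cont _; exact: cvg_snd. Qed.

End PairContinuity.

Section TripleContinuity.
Context {U V W : topologicalType} (t : U * V * W).

Lemma continuous_coord1 : {for t, continuous (fun y : U * V * W => y.1.1)}.
Proof. exact: continuous_fst (continuous_fst cvg_id). Qed.

Lemma continuous_coord2 : {for t, continuous (fun y : U * V * W => y.1.2)}.
Proof. exact: continuous_snd (continuous_fst cvg_id). Qed.

Lemma continuous_coord3 : {for t, continuous (fun y : U * V * W => y.2)}.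
Proof. exact: continuous_snd cvg_id. Qed.

End TripleContinuity.

Section CircleExp.
Context {R : realType}.
Implicit Types s t : R.

Lemma cexp2piD s t : cexp2pi (s + t) = cmul (cexp2pi s) (cexp2pi t).
Proof.
rewrite /cexp2pi /cmul /= mulrDr cosD sinD; congr (_, _).
by rewrite addrC mulrC [X in _ + X]mulrC.
Qed.

Lemma cexp2pi0 : cexp2pi 0 = (1, 0) :> R * R.
Proof. by rewrite /cexp2pi mulr0 cos0 sin0. Qed.

Lemma cexp2pi_half : cexp2pi (1 / 2) = (-1, 0) :> R * R.
Proof.
rewrite /cexp2pi; have -> : 2 * pi * (1 / 2) = pi :> R by field.
by rewrite cospi sinpi.
Qed.

Lemma cexp2piD1 t : cexp2pi (t + 1) = cexp2pi t.
Proof.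
rewrite /cexp2pi mulrDr mulr1.
have -> : 2 * pi = pi *+ 2 :> R by rewrite mulr_natl.
by rewrite cosD2pi sinD2pi.
Qed.

Lemma cexp2piDz t (k : int) : cexp2pi (t + k%:~R) = cexp2pi t.
Proof.
have cexp2piDn (u : R) (n : nat) : cexp2pi (u + n%:R) = cexp2pi u.
  by elim: n => [|n IHn]; rewrite ?addr0 // -natr1 addrA cexp2piD1.
case: k => n; first exact: cexp2piDn.
by rewrite NegzE mulrNz -(cexp2piDn (t - _) n.+1) subrK.
Qed.

(* The kernel of [t |-> e^{2 pi i t}]: reduce to [0 <= t < 1] and look at the
   sign of the sine on either side of [pi]. *)
Lemma cexp2pi_eq1 t : cexp2pi t = (1, 0) <-> t \is a Num.int.
Proof.
split=> [|/intrP[k ->]]; last by rewrite -[_%:~R]add0r cexp2piDz cexp2pi0.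
move=> e1; rewrite intrEfloor; apply/eqP.
set s := t - (Num.floor t)%:~R.
have s_ge0 : 0 <= s by rewrite subr_ge0 Num.Theory.floor_le.
have s_lt1 : s < 1.
  by rewrite ltrBlDr addrC -[1]/(1%:~R) -intrD Num.Theory.floorD1_gt.
have : cexp2pi s = (1, 0) by rewrite /s -mulrNz -[_ *~ _]/((- _)%:~R) cexp2piDz.
rewrite /cexp2pi => -[cos1 sin0]; apply/eqP; rewrite eq_sym -subr_eq0 -/s.
apply/negPn/negP => s_neq0.
have s_gt0 : 0 < s by rewrite lt_neqAle eq_sym s_neq0.
have pi_gt0 := @pi_gt0 R.
have [x_lt|x_ge] := ltrP (2 * pi * s) pi.
  have : 0 < sin (2 * pi * s) by apply: sin_gt0_pi; rewrite x_lt !mulr_gt0.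
  by rewrite sin0 ltxx.
have [x_eq|x_ne] := eqVneq (2 * pi * s) pi; first by move: cos1; rewrite x_eq cospi; lra.
have : 0 < sin (2 * pi * s - pi).
  apply: sin_gt0_pi; rewrite subr_gt0 lt_neqAle eq_sym x_ne x_ge /= ltrBlDr.
  nra.
by rewrite sinB sinpi cospi sin0; lra.
Qed.

Lemma circle_cexp2pi t : circle (cexp2pi t).
Proof. by rewrite /circle /cexp2pi /= cos2Dsin2. Qed.

Lemma cexp2pi_continuous : continuous (@cexp2pi R).
Proof.
move=> t; have lin : {for t, continuous (fun s : R => 2 * pi * s)}.
  by apply: cvgM; [exact: cvg_cst | exact: cvg_id].
apply: continuous_pair; first exact: continuous_comp lin (@continuous_cos R _).
exact: continuous_comp lin (@continuous_sin R _).
Qed.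

Lemma cpow_cexp2pi t (n : nat) : cpow (cexp2pi t) n = cexp2pi (n%:R * t).
Proof.
elim: n => [|n IHn]; first by rewrite mul0r cexp2pi0.
by rewrite /cpow iterS -/(cpow _ _) IHn -cexp2piD mulrSr mulrDl mul1r addrC.
Qed.

End CircleExp.

Section CircleDiv.
Context {R : realType}.
Implicit Types (s t : R) (a b w : R * R).

(* Multiplication by the complex conjugate; on the unit circle this is division. *)
Definition cdiv a b : R * R := cmul a (b.1, - b.2).

Lemma cmul_cdiv a b : circle b -> cmul b (cdiv a b) = a.
Proof.
rewrite /circle /cdiv /cmul /= => b_circ; rewrite [a]surjective_pairing /=.
by congr (_, _); rewrite -[RHS]mulr1 -b_circ; ring.
Qed.

Lemma circle_cdiv a b : circle a -> circle b -> circle (cdiv a b).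
Proof.
rewrite /circle /cdiv /cmul /= => a_circ b_circ.
by rewrite -[1]mulr1 -{1}a_circ -b_circ; ring.
Qed.

Lemma cdiv_cexp2pi s t : cdiv (cexp2pi s) (cexp2pi t) = cexp2pi (s - t).
Proof.
rewrite /cdiv /cexp2pi /cmul /= mulrBr cosB sinB; congr (_, _); first by ring.
by rewrite mulrN addrC mulrC [X in _ - X]mulrC.
Qed.

Lemma cdivv w : circle w -> cdiv w w = (1, 0).
Proof. by rewrite /circle /cdiv /cmul /= => w_circ; congr (_, _); rewrite -?w_circ; ring. Qed.

(* [2 Re (a conj b) = |a|^2 + |b|^2 - |a - b|^2] *)
Lemma cdiv_fst_gt0 a b : circle a -> circle b -> `|a - b| < 1 -> 0 < (cdiv a b).1.
Proof.
rewrite /circle /cdiv /cmul /= prod_normE gt_max /= !ltr_norml.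
move=> a_circ b_circ /andP[/andP[lt1 gt1] /andP[lt2 gt2]].
have -> : a.1 * b.1 - a.2 * - b.2
  = ((a.1 ^+ 2 + a.2 ^+ 2) + (b.1 ^+ 2 + b.2 ^+ 2) - (a.1 - b.1) ^+ 2 - (a.2 - b.2) ^+ 2) / 2
  by field.
rewrite a_circ b_circ; nra.
Qed.

Lemma cdiv_continuous {T : topologicalType} {u v : T -> R * R} {x : T} :
  {for x, continuous u} -> {for x, continuous v} ->
  {for x, continuous (fun y => cdiv (u y) (v y))}.
Proof.
move=> u_cont v_cont; rewrite /cdiv /cmul /=.
have [u1 u2] := (continuous_fst u_cont, continuous_snd u_cont).
have [v1 v2] := (continuous_fst v_cont, continuous_snd v_cont).
by apply: continuous_pair; [apply: cvgB | apply: cvgD]; apply: cvgM => //; apply: cvgN.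
Qed.

(* A continuous branch of [arg w / (2 pi)] on the half plane [w.1 > -1]; it comes
   from the half-angle formula [tan (pi t) = sin (2 pi t) / (1 + cos (2 pi t))]. *)
Definition carg w : R := atan (w.2 / (1 + w.1)) / pi.

Lemma carg_continuous w : 1 + w.1 != 0 -> {for w, continuous carg}.
Proof.
move=> w_neq0; apply: cvgM; last exact: cvg_cst.
apply: continuous_comp; last exact: continuous_atan.
apply: cvgM; first exact: cvg_snd.
by apply: cvgV => //; apply: cvgD; [exact: cvg_cst | exact: cvg_fst].
Qed.

Lemma cexp2pi_carg w : circle w -> 0 < 1 + w.1 -> cexp2pi (carg w) = w.
Proof.
rewrite /circle /= => w_circ w_gt0.
have w_neq0 : 1 + w.1 != 0 by rewrite gt_eqF.
set a := w.2 / (1 + w.1).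
have cos2 : cos (atan a) ^+ 2 = (1 + a ^+ 2)^-1.
  by rewrite cos_atan exprVn sqr_sqrtr // addr_ge0 // sqr_ge0.
have a2 : 1 + a ^+ 2 = 2 / (1 + w.1).
  rewrite /a expr_div_n (_ : w.2 ^+ 2 = 1 - w.1 ^+ 2); first by field.
  by rewrite -w_circ addrAC subrr add0r.
have sin_cos : sin (atan a) = a * cos (atan a).
  have cos_neq0 : cos (atan a) != 0.
    by rewrite cos_atan invr_eq0 gt_eqF // sqrtr_gt0 ltr_wpDr // sqr_ge0.
  by have := atanK a; rewrite /tan => {2}<-; rewrite divfK.
have angle : 2 * pi * (atan a / pi) = atan a *+ 2.
  have pi_neq0 : pi != 0 :> R by rewrite gt_eqF // pi_gt0.
  by rewrite -mulrA [pi * _]mulrCA mulfV // mulr1 mulrC mulr_natr.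
rewrite /cexp2pi /carg -/a angle cos_mulr2n sin_mulr2n cos2 a2 sin_cos.
rewrite [w]surjective_pairing; congr (_, _).
  by rewrite invf_div mulr2n; field.
by rewrite mulrCA -expr2 cos2 a2 invf_div /a mulr2n; field.
Qed.

Lemma cexp2pi_surj {w} : circle w -> exists t, cexp2pi t = w.
Proof.
move=> w_circ; have [w_gt0|w_le0] := ltrP 0 (1 + w.1).
  by exists (carg w); rewrite cexp2pi_carg.
exists (1 / 2); rewrite cexp2pi_half.
move: w_circ w_le0; rewrite /circle; case: w => x y /= w_circ w_le0.
have x2 : x ^+ 2 <= 1 by rewrite -w_circ lerDl sqr_ge0.
by congr (_, _); nra.
Qed.

End CircleDiv.

Section IntValued.
Context {R : realType}.

Lemma cexp2pi_eq_int (s t : R) : cexp2pi s = cexp2pi t -> s - t \is a Num.int.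
Proof.
by move=> e; apply/cexp2pi_eq1; rewrite -cdiv_cexp2pi e cdivv //; exact: circle_cexp2pi.
Qed.

(* Otherwise the intermediate value theorem produces a non-integral value
   strictly between two consecutive integers. *)
Lemma int_valued_segment_const (f : R -> R) :
  {within `[0, 1], continuous f} -> (forall s, 0 <= s <= 1 -> f s \is a Num.int) ->
  f 1 = f 0.
Proof.
wlog le01 : f / f 0 <= f 1 => [hwlog f_cont f_int|f_cont f_int].
  have [le01|lt10] := leP (f 0) (f 1); first exact: hwlog.
  apply: oppr_inj; apply: (hwlog (fun s => - f s)); first by rewrite lerN2 ltW.
    by move=> s; apply: cvgN; exact: f_cont.
  by move=> s /f_int; rewrite rpredN.
apply/eqP; rewrite eq_le le01 andbT leNgt; apply/negP => lt01.
have f0_int : f 0 \is a Num.int by apply: f_int; rewrite lexx ler01.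
have f1_int : f 1 \is a Num.int by apply: f_int; rewrite lexx ler01.
have gap : 1 <= f 1 - f 0.
  rewrite -[f 1 - _]ger0_norm ?subr_ge0 ?(ltW lt01) //.
  by apply: norm_intr_ge1; rewrite ?rpredB // subr_eq0 gt_eqF.
have mid : Num.min (f 0) (f 1) <= f 0 + 1 / 2 <= Num.max (f 0) (f 1).
  by rewrite ge_min le_max; apply/andP; split; apply/orP; [left|right]; lra.
have [c /[!in_itv] /= c01 fc] := IVT ler01 f_cont mid.
have : (1 / 2 : R) \is a Num.int.
  by rewrite -(addKr (f 0) (1 / 2)) -fc; apply: rpredD; [rewrite rpredN | exact: f_int].
by move/norm_intr_ge1; rewrite gt_eqF //= ger0_norm //; lra.
Qed.

Lemma int_valued_const (V : normedModType R) (D : V -> R) :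
  continuous D -> (forall x, D x \is a Num.int) -> forall x, D x = D 0.
Proof.
move=> D_cont D_int x; rewrite -[x in LHS]scale1r -(scale0r x).
apply: (@int_valued_segment_const (fun s => D (s *: x))) => [s|s _]; last exact: D_int.
apply: continuous_subspaceT => {}s.
exact: continuous_comp (@scalel_continuous _ _ x s) (D_cont _).
Qed.

Lemma cexp2pi_lifts_differ_const {V : normedModType R} {f g : V -> R} :
  continuous f -> continuous g -> (forall x, cexp2pi (f x) = cexp2pi (g x)) ->
  forall x, f x - g x = f 0 - g 0.
Proof.
move=> f_cont g_cont fg; apply: (@int_valued_const _ (fun x => f x - g x)).
- by move=> x; apply: cvgB; [exact: f_cont | exact: g_cont].
- by move=> x; apply: cexp2pi_eq_int.
Qed.

End IntValued.

Lemma compact_unif_continuous {R : realType} {V W : normedModType R} {f : V -> W} {K : set V} :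
  continuous f -> compact K -> forall e : R, 0 < e ->
  exists2 d : R, 0 < d & forall x, K x -> forall y, `|x - y| < d -> `|f x - f y| < e.
Proof.
move=> f_cont /compact_near_coveringP K_cover e e_gt0.
have e2_gt0 : 0 < e / 2 by rewrite divr_gt0.
have : \forall d \near (0:R)^'+,
    K `<=` (fun x => forall y, `|x - y| < d -> `|f x - f y| < e).
  apply: (K_cover _ _ (fun d x => forall y, `|x - y| < d -> `|f x - f y| < e)) => x _.
  have /cvgrPdist_lt /(_ _ e2_gt0) /nbhs_ballP[r r_gt0 near_fx] := f_cont x.
  have r2_gt0 : 0 < r / 2 by rewrite divr_gt0.
  exists (ball x (r / 2), [set d : R | d < r / 2]).
    by split; [exact: nbhsx_ballx | exact: nbhs_right_lt].
  case=> x' d [/= xx' dr] y x'y.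
  rewrite -ball_normE /= in xx'.
  have fx' : `|f x - f x'| < e / 2 by apply: near_fx; rewrite -ball_normE /=; lra.
  have fy : `|f x - f y| < e / 2.
    by apply: near_fx; rewrite -ball_normE /=; have := ler_distD x' x y; lra.
  by have := ler_distD (f x) (f x') (f y); rewrite [`|f x' - f x|]distrC; lra.
move=> near_d; near (0:R)^'+ => d.
exists d; first by near: d; exact: nbhs_right_gt.
by near: d.
Unshelve. all: by end_near.
Qed.

(* The lift along the segment [0, x] is a sum of local arguments [carg] over a
   subdivision fine enough for consecutive values of [W] to be within distance 1. *)
Section CircleLift.
Context {R : realType} (V : normedModType R) (W : V -> R * R).
Hypotheses (W_cont : continuous W) (W_circle : forall x, circle (W x)).
Variable d : R.
Hypotheses (d_gt0 : 0 < d) (W_unif : forall x y, `|x - y| < d -> `|W x - W y| < 1).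
Variable c0 : R.
Hypothesis c0_lift : cexp2pi c0 = W 0.

Let node (N : nat) (x : V) (j : nat) : V := (j%:R / N%:R) *: x.

Fixpoint seg_lift (N : nat) (x : V) (k : nat) : R :=
  if k is j.+1 then seg_lift N x j + carg (cdiv (W (node N x j.+1)) (W (node N x j)))
  else c0.

Lemma cdiv_node_fst_gt0 N x j : (0 < N)%N -> `|x| < N%:R * d ->
  0 < (cdiv (W (node N x j.+1)) (W (node N x j))).1.
Proof.
move=> N_gt0 x_lt; apply: cdiv_fst_gt0 => //; apply: W_unif.
rewrite /node -scalerBl -mulrBl -natrB // subSnn mul1r normrZ normfV.
by rewrite ger0_norm // ltr_pdivrMl ?ltr0n // mulrC.
Qed.

Lemma cexp2pi_seg_lift N x k : (0 < N)%N -> `|x| < N%:R * d ->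
  cexp2pi (seg_lift N x k) = W (node N x k).
Proof.
move=> N_gt0 x_lt; elim: k => [|k IHk] /=; first by rewrite /node mul0r scale0r.
rewrite cexp2piD IHk cexp2pi_carg ?cmul_cdiv //; first exact: circle_cdiv.
by rewrite ltr_wpDl // cdiv_node_fst_gt0.
Qed.

Lemma seg_lift_continuous N x k : (0 < N)%N -> `|x| < N%:R * d ->
  {for x, continuous (fun y => seg_lift N y k)}.
Proof.
move=> N_gt0 x_lt; elim: k => [|k IHk] /=; first exact: cvg_cst.
have W_node_cont i : {for x, continuous (fun y => W (node N y i))}.
  exact: continuous_comp (@scaler_continuous _ _ _ x) (W_cont _).
have neq0 : 1 + (cdiv (W (node N x k.+1)) (W (node N x k))).1 != 0.
  by rewrite gt_eqF // ltr_wpDl // cdiv_node_fst_gt0.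
apply: cvgD => //.
exact: continuous_comp (cdiv_continuous (W_node_cont _) (W_node_cont _))
                       (carg_continuous _ neq0).
Qed.

Lemma seg_lift0 N k : seg_lift N 0 k = c0.
Proof.
elim: k => [|k IHk] //=; rewrite IHk /node !scaler0 cdivv // /carg /=.
by rewrite mul0r atan0 mul0r addr0.
Qed.

(* Two subdivisions give lifts along [0, x] differing by a continuous integer. *)
Lemma seg_lift_indep N1 N2 x : (0 < N1)%N -> (0 < N2)%N ->
  `|x| < N1%:R * d -> `|x| < N2%:R * d -> seg_lift N1 x N1 = seg_lift N2 x N2.
Proof.
move=> N1_gt0 N2_gt0 x_lt1 x_lt2.
have sx_lt s N : 0 <= s <= 1 -> `|x| < N%:R * d -> `|s *: x| < N%:R * d.
  move=> /andP[s_ge0 s_le1] x_lt; rewrite normrZ ger0_norm //.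
  by apply: le_lt_trans x_lt; rewrite ler_piMl.
pose f s := seg_lift N1 (s *: x) N1 - seg_lift N2 (s *: x) N2.
suff : f 1 = f 0 by rewrite /f !scale0r !seg_lift0 subrr scale1r => /subr0_eq.
apply: int_valued_segment_const => [|s s01]; last first.
  apply: cexp2pi_eq_int; rewrite !cexp2pi_seg_lift ?sx_lt //.
  by rewrite /node !divff ?pnatr_eq0 -?lt0n.
apply: continuous_in_subspaceT => s; rewrite inE /= in_itv /= => s01.
have lift_cont N : (0 < N)%N -> `|x| < N%:R * d ->
    {for s, continuous (fun r : R => seg_lift N (r *: x) N)}.
  move=> N_gt0 x_lt.
  exact: continuous_comp (@scalel_continuous R V x s)
                         (@seg_lift_continuous N (s *: x) N N_gt0 (sx_lt _ _ s01 x_lt)).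
exact: cvgB (lift_cont _ N1_gt0 x_lt1) (lift_cont _ N2_gt0 x_lt2).
Qed.

Definition lift_steps (x : V) : nat := (Num.truncn (`|x| / d)).+1.

Lemma lift_steps_spec x : `|x| < (lift_steps x)%:R * d.
Proof. by rewrite -ltr_pdivrMr // truncnS_gt. Qed.

Definition circle_lift (x : V) : R := seg_lift (lift_steps x) x (lift_steps x).

Lemma cexp2pi_circle_lift x : cexp2pi (circle_lift x) = W x.
Proof.
by rewrite cexp2pi_seg_lift ?lift_steps_spec // /node divff ?pnatr_eq0 // scale1r.
Qed.

Lemma circle_lift_continuous : continuous circle_lift.
Proof.
move=> x; set N := lift_steps x.
have near_x : \forall y \near x, `|y| < N%:R * d.
  exact: cvgr_lt _ (@norm_continuous _ _ x) _ (lift_steps_spec x).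
have : (fun y => seg_lift N y N) @ x --> circle_lift x.
  exact: seg_lift_continuous (lift_steps_spec x).
apply: cvg_trans; apply: near_eq_cvg; near=> y.
by apply: seg_lift_indep; rewrite ?lift_steps_spec //; near: y.
Unshelve. all: by end_near.
Qed.

End CircleLift.

Lemma circle_lift_exists {R : realType} {V : normedModType R} {W : V -> R * R} :
  continuous W -> (forall x, circle (W x)) ->
  (exists2 d : R, 0 < d & forall x y, `|x - y| < d -> `|W x - W y| < 1) ->
  exists Phi : V -> R, continuous Phi /\ forall x, cexp2pi (Phi x) = W x.
Proof.
move=> W_cont W_circle [d d_gt0 W_unif].
have [c0 c0_lift] := cexp2pi_surj (W_circle 0).
exists (@circle_lift R V W d c0); split; first exact: circle_lift_continuous.
exact: cexp2pi_circle_lift.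
Qed.

Lemma continuous_comp_within {T U V : topologicalType} {E : T -> U} {A : set U} {g : U -> V} :
  continuous E -> (forall t, A (E t)) -> {within A, continuous g} -> continuous (g \o E).
Proof.
move=> E_cont EA /subspace_continuousP g_cont t.
have E_within : E @ t --> within A (nbhs (E t)).
  move=> P AP; have : nbhs t (E @^-1` (fun y => A y -> P y)) := E_cont t _ AP.
  by apply: filterS => y /(_ (EA y)).
exact: cvg_comp _ _ E_within (g_cont _ (EA t)).
Qed.

Section TorusExp.
Context {R : realType}.
Local Notation R3 := (R * R * R)%type.

Definition texp (t : R3) : (R * R) * (R * R) * (R * R) :=
  (cexp2pi t.1.1, cexp2pi t.1.2, cexp2pi t.2).

Definition intr3 (v : int3) : R3 := (v.1.1%:~R, v.1.2%:~R, v.2%:~R).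

Lemma texp_continuous : continuous texp.
Proof.
move=> t; have e (p : R3 -> R) : {for t, continuous p} ->
    {for t, continuous (fun y => cexp2pi (p y))}.
  by move=> p_cont; exact: continuous_comp p_cont (cexp2pi_continuous _).
by have := continuous_pair (continuous_pair (e _ (continuous_coord1 t))
  (e _ (continuous_coord2 t))) (e _ (continuous_coord3 t)).
Qed.

Lemma torus3_texp t : torus3 (texp t).
Proof. by split; [|split]; apply: circle_cexp2pi. Qed.

Lemma texpDintr3 t v : texp (t + intr3 v) = texp t.
Proof. by rewrite /texp /intr3 /= !cexp2piDz. Qed.

Lemma intr3D u v : intr3 (u + v) = intr3 u + intr3 v.
Proof. by rewrite /intr3 /= !intrD. Qed.

Lemma intr3_inj : injective intr3.
Proof.
case=> [[u1 u2] u3] [[v1 v2] v3] [/intr_inj-> /intr_inj-> /intr_inj->].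
by [].
Qed.

Lemma unit_cube_compact : compact (`[0, 1] `*` `[0, 1] `*` `[0, 1] : set R3).
Proof. by apply: compact_setX; [apply: compact_setX|]; exact: segment_compact. Qed.

Lemma periodic_unif_continuous {Y : normedModType R} {W : R3 -> Y} :
  continuous W -> (forall t v, W (t + intr3 v) = W t) ->
  exists2 d : R, 0 < d & forall x y, `|x - y| < d -> `|W x - W y| < 1.
Proof.
move=> W_cont W_per.
have [d d_gt0 W_unif] := compact_unif_continuous W_cont unit_cube_compact _ ltr01.
exists d => // x y xy.
have frac (r : R) : r - (Num.floor r)%:~R \in `[0, 1].
  rewrite in_itv /= subr_ge0 Num.Theory.floor_le /= lerBlDr addrC.
  by apply: ltW; rewrite -[1]/(1%:~R) -intrD Num.Theory.floorD1_gt.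
set v := (Num.floor x.1.1, Num.floor x.1.2, Num.floor x.2) : int3.
have /W_unif : (`[0, 1] `*` `[0, 1] `*` `[0, 1]) (x - intr3 v).
  by split; [split|]; apply: frac.
move=> /(_ (y - intr3 v)); rewrite opprB addrA subrK => /(_ xy).
by rewrite -(W_per (x - intr3 v) v) -(W_per (y - intr3 v) v) !subrK.
Qed.

(* [Phi (t + v) - Phi t] is a continuous integer-valued function of [t]. *)
Lemma periodic_circle_lift (W : R3 -> R * R) : continuous W ->
  (forall t, circle (W t)) -> (forall t v, W (t + intr3 v) = W t) ->
  exists (Phi : R3 -> R) (M : int3 -> int),
    [/\ continuous Phi, forall t, cexp2pi (Phi t) = W t &
        forall t v, Phi (t + intr3 v) = Phi t + (M v)%:~R].
Proof.
move=> W_cont W_circle W_per.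
have [Phi [Phi_cont Phi_lift]] :=
  circle_lift_exists W_cont W_circle (periodic_unif_continuous W_cont W_per).
exists Phi, (fun v => Num.floor (Phi (intr3 v) - Phi 0)); split=> // t v.
have shift_cont : continuous (fun y : R3 => Phi (y + intr3 v)).
  move=> y; have shift : {for y, continuous (fun z : R3 => z + intr3 v)}.
    by apply: cvgD; [exact: cvg_id | exact: cvg_cst].
  exact: continuous_comp shift (Phi_cont _).
have shift_lift y : cexp2pi (Phi (y + intr3 v)) = cexp2pi (Phi y).
  by rewrite !Phi_lift W_per.
have := cexp2pi_lifts_differ_const shift_cont Phi_cont shift_lift t.
rewrite add0r floorK => [<-|]; first by rewrite addrCA subrr addr0.
by apply: cexp2pi_eq_int; rewrite -[intr3 v]add0r shift_lift.
Qed.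

Lemma texp_lifts_differ_const {P Q : R3 -> R3} :
  continuous P -> continuous Q -> (forall t, texp (P t) = texp (Q t)) ->
  forall t, P t - Q t = P 0 - Q 0.
Proof.
move=> P_cont Q_cont PQ t.
have coord (p : R3 -> R) : (forall y, {for y, continuous p}) ->
    (forall y, cexp2pi (p (P y)) = cexp2pi (p (Q y))) ->
    p (P t) - p (Q t) = p (P 0) - p (Q 0).
  move=> p_cont pPQ; apply: cexp2pi_lifts_differ_const pPQ t.
    by move=> y; apply: continuous_comp (P_cont y) (p_cont _).
  by move=> y; apply: continuous_comp (Q_cont y) (p_cont _).
have coordB (a b : R3) : a - b = (a.1.1 - b.1.1, a.1.2 - b.1.2, a.2 - b.2) by [].
rewrite !coordB.
rewrite (coord _ continuous_coord1 (fun y => congr1 (fun p => p.1.1) (PQ y))).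
rewrite (coord _ continuous_coord2 (fun y => congr1 (fun p => p.1.2) (PQ y))).
by rewrite (coord _ continuous_coord3 (fun y => congr1 (fun p => p.2) (PQ y))).
Qed.

End TorusExp.

Section TorusLift.
Context {R : realType}.
Local Notation R3 := (R * R * R)%type.
Local Notation T3 := ((R * R) * (R * R) * (R * R))%type.

(* [Psi] lifts [g] to the universal cover [R^3], and [M] is the action of [g]
   on [pi_1 = Z^3]. *)
Definition torus_lift (g : T3 -> T3) (Psi : R3 -> R3) (M : int3 -> int3) :=
  [/\ continuous Psi, forall t, texp (Psi t) = g (texp t) &
      forall t v, Psi (t + intr3 v) = Psi t + intr3 (M v)].

Lemma torus_lift_exists {g : T3 -> T3} :
  (forall p, torus3 p -> torus3 (g p)) -> {within torus3, continuous g} ->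
  exists Psi M, torus_lift g Psi M.
Proof.
move=> g_torus g_cont.
have G_cont := continuous_comp_within texp_continuous torus3_texp g_cont.
have coord (p : T3 -> R * R) : (forall x, {for x, continuous p}) ->
    (forall x, torus3 x -> circle (p x)) ->
    exists (Phi : R3 -> R) (N : int3 -> int),
      [/\ continuous Phi, forall t, cexp2pi (Phi t) = p (g (texp t)) &
          forall t v, Phi (t + intr3 v) = Phi t + (N v)%:~R].
  move=> p_cont p_circle; apply: periodic_circle_lift.
  - by move=> t; exact: continuous_comp (G_cont t) (p_cont _).
  - by move=> t; apply/p_circle/g_torus/torus3_texp.
  - by move=> t v; rewrite texpDintr3.
have [P1 [M1 [P1_cont P1_lift P1_per]]] := coord _ continuous_coord1 (fun _ p => p.1).
have [P2 [M2 [P2_cont P2_lift P2_per]]] := coord _ continuous_coord2 (fun _ p => p.2.1).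
have [P3 [M3 [P3_cont P3_lift P3_per]]] := coord _ continuous_coord3 (fun _ p => p.2.2).
exists (fun t => (P1 t, P2 t, P3 t)), (fun v => (M1 v, M2 v, M3 v)); split.
- by move=> t; have := continuous_pair (continuous_pair (P1_cont t) (P2_cont t)) (P3_cont t).
- by move=> t; rewrite /texp /= P1_lift P2_lift P3_lift; case: (g (texp t)) => [[]].
- by move=> t v; rewrite P1_per P2_per P3_per.
Qed.

Lemma torus_lift_additive {g Psi M} : torus_lift g Psi M -> {morph M : u v / u + v}.
Proof.
case=> _ _ Psi_per u v; have := Psi_per 0 (u + v).
by rewrite intr3D addrA !Psi_per -addrA -intr3D => /addrI/intr3_inj.
Qed.

Lemma torus_lift_unique {g P1 M1 P2 M2} :
  torus_lift g P1 M1 -> torus_lift g P2 M2 -> M1 =1 M2.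
Proof.
case=> P1_cont P1_lift P1_per [P2_cont P2_lift P2_per] v; apply: intr3_inj.
have P12 t : texp (P1 t) = texp (P2 t) by rewrite P1_lift P2_lift.
have := texp_lifts_differ_const P1_cont P2_cont P12 (intr3 v).
rewrite -[intr3 v]add0r P1_per P2_per opprD addrACA => /(canRL (addKr _)).
by rewrite addNr; apply: subr0_eq.
Qed.

Lemma torus_lift_comp {g f Pg Mg Pf Mf} :
  torus_lift g Pg Mg -> torus_lift f Pf Mf -> torus_lift (g \o f) (Pg \o Pf) (Mg \o Mf).
Proof.
case=> Pg_cont Pg_lift Pg_per [Pf_cont Pf_lift Pf_per]; split.
- by move=> t; apply: continuous_comp (Pf_cont t) (Pg_cont _).
- by move=> t /=; rewrite Pg_lift Pf_lift.
- by move=> t v /=; rewrite Pf_per Pg_per.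
Qed.

Lemma torus_lift_id : torus_lift id id id.
Proof. by split=> // t; exact: cvg_id. Qed.

Lemma torus_lift_comp_unique {g1 f1 g2 f2 P1 M1 Q1 N1 P2 M2 Q2 N2} :
  torus_lift g1 P1 M1 -> torus_lift f1 Q1 N1 ->
  torus_lift g2 P2 M2 -> torus_lift f2 Q2 N2 ->
  (forall p, torus3 p -> g1 (f1 p) = g2 (f2 p)) -> forall v, M1 (N1 v) = M2 (N2 v).
Proof.
move=> lg1 lf1 lg2 lf2 gf.
have lg2f2 : torus_lift (g1 \o f1) (P2 \o Q2) (M2 \o N2).
  case: (torus_lift_comp lg2 lf2) => PQ_cont PQ_lift PQ_per; split=> // t.
  by rewrite PQ_lift /= gf //; exact: torus3_texp.
exact: torus_lift_unique (torus_lift_comp lg1 lf1) lg2f2.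
Qed.

End TorusLift.

Definition skew_lin (a b : nat) (v : int3) : int3 :=
  (v.1.1, v.1.2 + a%:Z * v.1.1, v.2 + b%:Z * v.1.2).

Definition skew_affine {R : realType} (theta : R) (a b : nat) (t : R * R * R) : R * R * R :=
  (t.1.1 + theta, t.1.2 + a%:R * t.1.1, t.2 + b%:R * t.1.2).

Lemma skew_map_lift {R : realType} (theta : R) (a b : nat) :
  torus_lift (skew_map theta a b) (skew_affine theta a b) (skew_lin a b).
Proof.
split.
- move=> t; have lin (c : nat) (p q : R * R * R -> R) : {for t, continuous p} ->
      {for t, continuous q} -> {for t, continuous (fun y => p y + c%:R * q y)}.
    by move=> p_cont q_cont; apply: cvgD => //; apply: cvgM => //; exact: cvg_cst.
  have shift : {for t, continuous (fun y : R * R * R => y.1.1 + theta)}.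
    by apply: cvgD; [exact: continuous_coord1 | exact: cvg_cst].
  by have := continuous_pair (continuous_pair shift
    (lin a _ _ (continuous_coord2 t) (continuous_coord1 t)))
    (lin b _ _ (continuous_coord3 t) (continuous_coord2 t)).
- move=> t; rewrite /skew_affine /texp /skew_map /= !cpow_cexp2pi -!cexp2piD.
  by rewrite addrC [_ * _ + _]addrC [b%:R * _ + _]addrC.
- move=> t v; rewrite /skew_affine /intr3 /skew_lin /=; congr (_, _, _).
  + by rewrite addrAC.
  + by rewrite intrD intrM /= mulrDr; ring.
  + by rewrite intrD intrM /= mulrDr; ring.
Qed.

Lemma pairMzE (M1 M2 : zmodType) (x : M1 * M2) (c : int) :
  x *~ c = (x.1 *~ c, x.2 *~ c).
Proof. by case: c => n; rewrite ?NegzE ?mulrNz -?pmulrn pairMnE. Qed.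

Lemma morph_mulrz {U V : zmodType} {f : U -> V} :
  {morph f : x y / x + y} -> forall c : int, {morph f : x / x *~ c}.
Proof.
move=> fD c x.
have fB : zmod_morphism f by move=> a b; apply: (@addIr _ (f b)); rewrite -fD !subrK.
pose F : {additive U -> V} := HB.pack f (GRing.isZmodMorphism.Build U V f fB).
exact: (raddfMz F).
Qed.

Lemma e3_mulrz (k c : int) : (0, 0, c) *~ k = (0, 0, c * k) :> int3.
Proof. by rewrite !pairMzE /= !mul0rz mulrzz. Qed.

Lemma skew_lin_e3 a b (k : int) : skew_lin a b (0, 0, k) = (0, 0, k).
Proof. by rewrite /skew_lin /= !mulr0 !addr0. Qed.

Lemma skew_linDe3 a b v (k : int) :
  skew_lin a b (v + (0, 0, k)) = skew_lin a b v + (0, 0, k).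
Proof. by rewrite /skew_lin /=; congr (_, _, _); rewrite /=; ring. Qed.

Lemma skew_lin_fixed a b v : (0 < a)%N -> (0 < b)%N -> skew_lin a b v = v -> v = (0, 0, v.2).
Proof.
case: v => [[x y] z] a_gt0 b_gt0 [/(canRL (addKr _))] /[!addNr] /eqP.
rewrite mulf_eq0 eqz_nat (negbTE (lt0n_neq0 a_gt0)) => /eqP -> /(canRL (addKr _)).
by rewrite addNr => /eqP; rewrite mulf_eq0 eqz_nat (negbTE (lt0n_neq0 b_gt0)) => /eqP ->.
Qed.

(* With [A = skew_lin m n] and [B = skew_lin n m]: both fix exactly the line [Z e3],
   so [Y e3 = c e3] with [c] a unit.  Applying [Y] to [B^{+-1} e2 - e2 = +- m e3]
   gives [A w - w = +- m c e3] for [w = Y e2]; the third coordinate of [A w - w] is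
   [n w.1.2], so [n] divides [m]. *)
Lemma skew_lin_not_flip_conj {m n : nat} {X Y : int3 -> int3} :
  (0 < m)%N -> (m < n)%N -> {morph X : u v / u + v} -> {morph Y : u v / u + v} ->
  cancel Y X -> cancel X Y ->
  (forall v, X (skew_lin m n v) = skew_lin n m (X v)) \/
  (forall v, skew_lin n m (X (skew_lin m n v)) = X v) -> False.
Proof.
move=> m_gt0 m_lt_n XD YD YK XK conjX.
have n_gt0 : (0 < n)%N by apply: ltn_trans m_lt_n.
have conjY : (forall w, Y (skew_lin n m w) = skew_lin m n (Y w)) \/
             (forall w, skew_lin m n (Y (skew_lin n m w)) = Y w).
  case: conjX => conjX; [left|right] => w; first by rewrite -{1}(YK w) -conjX XK.
  have B_inj : injective (skew_lin n m).
    by case=> [[? ?] ?] [[? ?] ?]; rewrite /skew_lin /= => -[-> /addIr -> /addIr ->].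
  by apply: (can_inj XK); apply: B_inj; rewrite conjX !YK.
have [c Ye3] : exists c, Y (0, 0, 1) = (0, 0, c).
  exists (Y (0, 0, 1)).2; apply: skew_lin_fixed m_gt0 n_gt0 _.
  case: conjY => conjY; first by rewrite -conjY skew_lin_e3.
  by rewrite -{2}(conjY (0, 0, 1)) skew_lin_e3.
have e3z k : (0, 0, k) = (0, 0, 1) *~ k :> int3 by rewrite e3_mulrz mul1r.
have Ye3z k : Y (0, 0, k) = (0, 0, c * k).
  by rewrite e3z (morph_mulrz YD) Ye3 e3_mulrz.
have c_unit : c * (X (0, 0, 1)).2 = 1.
  have := YK (0, 0, 1); rewrite Ye3 e3z (morph_mulrz XD) pairMzE => -[_].
  by rewrite mulrzz mulrC.
have Be2 : skew_lin n m (0, 1, 0) = (0, 1, 0) + (0, 0, m%:Z).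
  by rewrite /skew_lin /=; congr (_, _, _); rewrite /=; ring.
have key : n%:Z * (Y (0, 1, 0)).1.2 = m%:Z * c \/ n%:Z * (Y (0, 1, 0)).1.2 = - (m%:Z * c).
  case: conjY => conjY; [left|right]; move: (conjY (0, 1, 0)).
    rewrite Be2 YD Ye3z /skew_lin => /(congr1 snd) /=; lia.
  rewrite Be2 YD Ye3z skew_linDe3 /skew_lin => /(congr1 snd) /=; lia.
have [q m_eq] : exists q, m%:Z = n%:Z * q.
  move: key c_unit; set w := (Y (0, 1, 0)).1.2; set x := (X (0, 0, 1)).2.
  case=> e cx; [exists (w * x) | exists (- (w * x))].
    by rewrite -[LHS]mulr1 -cx mulrA -e; ring.
  by rewrite -[LHS]mulr1 -cx mulrA -[_ * c]opprK -e; ring.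
have : (0 < m%:Z) && (m%:Z < n%:Z) by rewrite !ltz_nat m_gt0 m_lt_n.
by rewrite m_eq; have [q_le0|q_gt0] := lerP q 0; nia.
Qed.

Lemma flip_conj_on_homeo {X : topologicalType} {A : set X} {f1 f2 : X -> X} :
  flip_conj_on A f1 f2 ->
  exists g, homeo_on A g /\ ((forall p, A p -> g (f1 p) = f2 (g p)) \/
                             (forall p, A p -> f2 (g (f1 p)) = g p)).
Proof.
case=> [[g [g_homeo conj]]|[f2inv [[_ _ f2K] [g [g_homeo conj]]]]].
  by exists g; split=> //; left.
exists g; split=> //; right => p Ap; rewrite conj // f2K //.
by case: g_homeo => g' [gA _ _ _ _]; exact: gA.
Qed.

Theorem mainTheorem3 (R : realType) (theta : R) (m n : nat)
  (htheta : 0 <= theta <= 1) (hirr : forall q : rat, theta != ratr q)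
  (hm : (0 < m)%N) (hmn : (m < n)%N) :
  ~ flip_conj_on torus3 (skew_map theta m n) (skew_map theta n m).
Proof.
move=> /flip_conj_on_homeo[g [[g' [gT g'T g'K gK [g_cont g'_cont]]] g_conj]].
have [Pg [Mg lift_g]] := torus_lift_exists gT g_cont.
have [Pg' [Mg' lift_g']] := torus_lift_exists g'T g'_cont.
have lift_h := skew_map_lift theta m n.
have lift_k := skew_map_lift theta n m.
apply: (skew_lin_not_flip_conj hm hmn (torus_lift_additive lift_g) (torus_lift_additive lift_g')).
- exact: torus_lift_comp_unique lift_g lift_g' torus_lift_id torus_lift_id gK.
- exact: torus_lift_comp_unique lift_g' lift_g torus_lift_id torus_lift_id g'K.
case: g_conj => conj; [left|right].
  exact: (torus_lift_comp_unique lift_g lift_h lift_k lift_g conj).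
exact: (torus_lift_comp_unique lift_k (torus_lift_comp lift_g lift_h) lift_g torus_lift_id conj).
Qed.
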